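(* Let $w>0$ and let $\rho_1,\rho_2:\mathbb R\to[0,\infty)$ be bounded unnormalised densities which are quasi-concave (every level set $\{x:\rho_i(x)\ge t\}$ is an interval) with nonempty $\arg\max\rho_i$ and \[ \inf_{r\in\arg\max\rho_1,\ s\in\arg\max\rho_2}|r-s|<w . \] Then $\rho_{\max}:=\max\{\rho_1,\rho_2\}\in\mathcal R_w$.
   Context: For $w>0$ and $\rho:\mathbb R\to[0,\infty)$ with level sets $K(t)=\{x:\rho(x)\ge t\}$, we write $\rho\in\mathcal R_w$ if there exist $t_1\le t_2$ in $[0,\|\rho\|_\infty]$ such that: (a) for all $t\in[0,t_1]\cup(t_2,\|\rho\|_\infty]$, $K(t)$ is an interval; (b) for all $t\in(t_1,t_2]$ there are disjoint intervals $K_1(t),K_2(t)$ with $K(t)=K_1(t)\cup K_2(t)$ and $K_i(t+\varepsilon)\subseteq K_i(t)$ for all $\varepsilon>0$, $i=1,2$; (c) for all $t\in[0,\|\rho\|_\infty]$, $\delta_t<w$, where $\delta_t=\inf_{r\in K_1(t),s\in K_2(t)}|r-s|$ for $t\in(t_1,t_2]$ and $\delta_t=0$ otherwise. *)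

From Stdlib Require Import Reals.
Open Scope R_scope.

Definition is_interval (I : R -> Prop) : Prop :=
  forall x y z, I x -> I y -> x <= z <= y -> I z.

Definition level_set (rho : R -> R) (t : R) : R -> Prop :=
  fun x => rho x >= t.

Definition quasi_concave (rho : R -> R) : Prop :=
  forall t, is_interval (level_set rho t).

Definition argmax (rho : R -> R) : R -> Prop :=
  fun x => forall y, rho y <= rho x.

Definition sup_norm_is (rho : R -> R) (M : R) : Prop :=
  is_lub (fun y => exists x, y = rho x) M.

(* The class R_w.  delta_t < w for t in (t1,t2] means
   inf_{r in K1(t), s in K2(t)} |r - s| < w, i.e. some r in K1(t), s in K2(t)
   satisfy |r-s| < w (for t outside (t1,t2], delta_t = 0 < w trivially). *)
Definition in_Rw (w : R) (rho : R -> R) : Prop :=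
  exists M t1 t2 (K1 K2 : R -> R -> Prop),
    sup_norm_is rho M /\
    0 <= t1 <= t2 /\ t2 <= M /\
    (forall t, ((0 <= t <= t1) \/ (t2 < t <= M)) -> is_interval (level_set rho t)) /\
    (forall t, t1 < t <= t2 ->
       is_interval (K1 t) /\ is_interval (K2 t) /\
       (forall x, ~ (K1 t x /\ K2 t x)) /\
       (forall x, level_set rho t x <-> (K1 t x \/ K2 t x))) /\
    (forall t eps, t1 < t -> 0 < eps -> t + eps <= t2 ->
       (forall x, K1 (t + eps) x -> K1 t x) /\
       (forall x, K2 (t + eps) x -> K2 t x)) /\
    (forall t, t1 < t <= t2 ->
       exists r s, K1 t r /\ K2 t s /\ Rabs (r - s) < w).

From Stdlib Require Import Reals Lra Classical.
Open Scope R_scope.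

(* Pick maximisers r of rho1 and s of rho2 with |r - s| < w, and let
   t2 = min (rho1 r) (rho2 s).  Above t2 the level set of rho_max is a level
   set of whichever density reaches the higher peak, hence an interval.  Below
   t2 both level sets contain their own peak, so the level set of rho_max is
   the union of two intervals containing r and s respectively; it is an
   interval exactly when rho_max >= t on the whole segment between r and s.
   Let t1 be the supremum of those t.  For t in (t1, t2] some point between r
   and s escapes both level sets, which forces them to be disjoint, and the
   peaks r, s witness the distance bound < w. *)

Definition strictly_between (a b z : R) : Prop := a < z < b \/ b < z < a.

Lemma is_interval_ext (I J : R -> Prop) :
  (forall x, I x <-> J x) -> is_interval I -> is_interval J.
Proof. intros HIJ HI x y z Jx Jy Hz; apply HIJ, (HI x y z); [apply HIJ, Jx|apply HIJ, Jy|exact Hz]. Qed.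

Lemma is_interval_union_bridge (I J : R -> Prop) (a b : R) :
  is_interval I -> is_interval J -> I a -> J b ->
  (forall z, strictly_between a b z -> I z \/ J z) ->
  is_interval (fun x => I x \/ J x).
Proof.
  intros HI HJ Ia Jb Hgap x y u [Ix|Jx] [Iy|Jy] Hu.
  - left; exact (HI x y u Ix Iy Hu).
  - destruct (Rle_dec u a); [left; exact (HI x a u Ix Ia ltac:(lra))|].
    destruct (Rle_dec b u); [right; exact (HJ b y u Jb Jy ltac:(lra))|].
    apply Hgap; left; lra.
  - destruct (Rle_dec u b); [right; exact (HJ x b u Jx Jb ltac:(lra))|].
    destruct (Rle_dec a u); [left; exact (HI a y u Ia Iy ltac:(lra))|].
    apply Hgap; right; lra.
  - right; exact (HJ x y u Jx Jy Hu).
Qed.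

Lemma disjoint_of_gap (I J : R -> Prop) (a b z : R) :
  is_interval I -> is_interval J -> I a -> J b ->
  strictly_between a b z -> ~ I z -> ~ J z ->
  forall x, ~ (I x /\ J x).
Proof.
  intros HI HJ Ia Jb [Hz|Hz] nIz nJz x [Ix Jx]; destruct (Rle_dec z x).
  - exact (nIz (HI a x z Ia Ix ltac:(lra))).
  - exact (nJz (HJ x b z Jx Jb ltac:(lra))).
  - exact (nJz (HJ b x z Jb Jx ltac:(lra))).
  - exact (nIz (HI x a z Ix Ia ltac:(lra))).
Qed.

Lemma level_set_Rmax (f g : R -> R) (t x : R) :
  level_set (fun y => Rmax (f y) (g y)) t x <-> level_set f t x \/ level_set g t x.
Proof. unfold level_set, Rmax; destruct (Rle_dec (f x) (g x)); lra. Qed.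

Lemma level_set_Rmax_l (f g : R -> R) (c t : R) :
  (forall x, g x <= c) -> c < t ->
  forall x, level_set (fun y => Rmax (f y) (g y)) t x <-> level_set f t x.
Proof. intros Hg Hct x; rewrite level_set_Rmax; unfold level_set; specialize (Hg x); lra. Qed.

Lemma level_set_Rmax_r (f g : R -> R) (c t : R) :
  (forall x, f x <= c) -> c < t ->
  forall x, level_set (fun y => Rmax (f y) (g y)) t x <-> level_set g t x.
Proof. intros Hf Hct x; rewrite level_set_Rmax; unfold level_set; specialize (Hf x); lra. Qed.

Lemma sup_norm_is_Rmax (f g : R -> R) (r s : R) :
  argmax f r -> argmax g s ->
  sup_norm_is (fun x => Rmax (f x) (g x)) (Rmax (f r) (g s)).
Proof.
  intros Ar As; split.
  - intros y [x ->]; specialize (Ar x); specialize (As x).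
    apply Rmax_lub; [apply Rle_trans with (f r)|apply Rle_trans with (g s)];
      auto using Rmax_l, Rmax_r.
  - intros b Hb; apply Rmax_lub.
    + apply Rle_trans with (Rmax (f r) (g r)); [apply Rmax_l|apply Hb; eauto].
    + apply Rle_trans with (Rmax (f s) (g s)); [apply Rmax_r|apply Hb; eauto].
Qed.

Lemma is_interval_level_set_Rmax_above (f g : R -> R) (r s t : R) :
  argmax f r -> argmax g s -> quasi_concave f -> quasi_concave g ->
  Rmin (f r) (g s) < t ->
  is_interval (level_set (fun x => Rmax (f x) (g x)) t).
Proof.
  intros Ar As Qf Qg; unfold Rmin; destruct (Rle_dec (f r) (g s)); intros Ht.
  - apply is_interval_ext with (level_set g t); [|apply Qg].
    intros x; symmetry; exact (level_set_Rmax_r f g (f r) t Ar Ht x).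
  - apply is_interval_ext with (level_set f t); [|apply Qf].
    intros x; symmetry; exact (level_set_Rmax_l f g (g s) t As Ht x).
Qed.

Lemma is_interval_level_set_Rmax_below (f g : R -> R) (r s t : R) :
  quasi_concave f -> quasi_concave g -> level_set f t r -> level_set g t s ->
  (forall z, strictly_between r s z -> level_set (fun x => Rmax (f x) (g x)) t z) ->
  is_interval (level_set (fun x => Rmax (f x) (g x)) t).
Proof.
  intros Qf Qg Lr Ls Hgap.
  apply is_interval_ext with (fun x => level_set f t x \/ level_set g t x).
  - intros x; symmetry; apply level_set_Rmax.
  - apply is_interval_union_bridge with r s; auto.
    intros z Hz; apply level_set_Rmax, Hgap, Hz.
Qed.

Lemma exists_gap_threshold (h : R -> R) (S : R -> Prop) (c : R) :
  0 <= c -> (forall z, 0 <= h z) ->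
  exists t1, 0 <= t1 <= c /\
    (forall t z, t <= t1 -> S z -> level_set h t z) /\
    (forall t, t1 < t <= c -> exists z, S z /\ ~ level_set h t z).
Proof.
  intros Hc Hh.
  set (E := fun t => t <= c /\ forall z, S z -> t <= h z).
  assert (E0 : E 0) by (split; [lra|intros z _; apply Hh]).
  destruct (completeness E) as [t1 [Hub Hlub]].
  - exists c; intros t [Ht _]; exact Ht.
  - exists 0; exact E0.
  - exists t1; split; [split; [apply Hub, E0|apply Hlub; intros t [Ht _]; exact Ht]|split].
    + intros t z Ht Sz; unfold level_set.
      assert (t1 <= h z) by (apply Hlub; intros e [_ He]; apply He, Sz); lra.
    + intros t Ht; apply NNPP; intros Hno.
      assert (Et : E t).
      { split; [lra|]; intros z Sz.
        apply Rge_le, NNPP; intros Hz; apply Hno; exists z; auto. }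
      specialize (Hub t Et); lra.
Qed.

Theorem lemma4p1 (w : R) (rho1 rho2 : R -> R) :
  0 < w ->
  (forall x, 0 <= rho1 x) -> (forall x, 0 <= rho2 x) ->
  (exists B, forall x, rho1 x <= B) -> (exists B, forall x, rho2 x <= B) ->
  quasi_concave rho1 -> quasi_concave rho2 ->
  (exists x, argmax rho1 x) -> (exists x, argmax rho2 x) ->
  (exists r s, argmax rho1 r /\ argmax rho2 s /\ Rabs (r - s) < w) ->
  in_Rw w (fun x => Rmax (rho1 x) (rho2 x)).
Proof.
  intros _ H1 H2 _ _ Q1 Q2 _ _ [r [s [Ar [As Hrs]]]].
  set (t2 := Rmin (rho1 r) (rho2 s)).
  assert (Ht2 : 0 <= t2 <= rho1 r /\ t2 <= rho2 s)
    by (unfold t2; repeat split; auto using Rmin_glb, Rmin_l, Rmin_r).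
  destruct (exists_gap_threshold (fun x => Rmax (rho1 x) (rho2 x))
              (strictly_between r s) t2) as [t1 [Ht1 [Hbelow Habove]]].
  { apply Ht2. }
  { intros z; apply Rle_trans with (rho1 z); auto using Rmax_l. }
  exists (Rmax (rho1 r) (rho2 s)), t1, t2, (level_set rho1), (level_set rho2).
  split; [apply sup_norm_is_Rmax; auto|].
  split; [lra|]; split; [apply Rminmax|].
  split.
  { intros t [Ht|Ht].
    - apply is_interval_level_set_Rmax_below with r s; auto;
        unfold level_set; [lra|lra|intros z; apply Hbelow; lra].
    - apply is_interval_level_set_Rmax_above with r s; auto; apply Ht. }
  split.
  { intros t Ht; destruct (Habove t Ht) as [z [Hz Hgap]].
    rewrite level_set_Rmax in Hgap.
    split; [apply Q1|split; [apply Q2|split; [|apply level_set_Rmax]]].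
    apply (disjoint_of_gap _ _ r s z); auto; unfold level_set; lra. }
  split.
  { intros t eps _ Heps _; unfold level_set; split; intros; lra. }
  intros t Ht; exists r, s; unfold level_set; repeat split; auto; lra.
Qed.
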